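(* For every even $N\ge2$, the eigenvalue $r_{1,N}(z)$ has a pole of order $2N$ at $z=1$ and the eigenvalue $r_{2,N}(z)$ has a zero of order $2N$ at $z=1$.
   Context: Fix $0<\alpha,\beta<1$. For $\varepsilon\in(0,1)$: $\phi_{\varepsilon,1}(z)=\begin{pmatrix}1&\varepsilon^2z^{-1}\\ \varepsilon^{-2}&1\end{pmatrix}$, $\phi_{\varepsilon,2}(z)=\frac{1}{1-z^{-1}}\phi_{\varepsilon,1}(z)$, $\phi_3(z)=\begin{pmatrix}1&z^{-1}\\1&1\end{pmatrix}$, $\phi_4(z)=\frac{1}{1-z^{-1}}\phi_3(z)$, $\Phi_\varepsilon=\phi_{\varepsilon,1}\phi_{\varepsilon,2}\phi_3\phi_4$. Let $\phi_N(z)=\Phi_\alpha(z)^{N/2}\Phi_\beta(z)^{N/2}$ (determinant $1$), $t_N=\operatorname{tr}\phi_N$; in a punctured neighborhood of $1$, $r_{1,N}=\frac12(t_N+\sqrt{t_N^2-4})$, $r_{2,N}=\frac12(t_N-\sqrt{t_N^2-4})$ where $\sqrt{t^2-4}=t(1-4/t^2)^{1/2}$ (principal branch, valid for $|t|$ large). *)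

From HB Require Import structures.
From mathcomp Require Import all_boot all_order all_algebra.
From mathcomp Require Import complex.
From mathcomp Require Import all_classical all_reals all_analysis.
Set Implicit Arguments. Unset Strict Implicit. Unset Printing Implicit Defensive.
Import Order.TTheory GRing.Theory Num.Theory.
Local Open Scope ring_scope.

Section Defs.
Variable R : realType.
Local Notation C := R[i].

Definition mx2 (a b c d : C) : 'M[C]_2 :=
  \matrix_(i < 2, j < 2)
     if (i == 0 :> nat) then (if (j == 0 :> nat) then a else b)
     else (if (j == 0 :> nat) then c else d).

Definition phi1 (eps : R) (z : C) : 'M[C]_2 :=
  mx2 1 (((eps ^+ 2)%:C)%C * z^-1) (((eps ^+ 2)^-1)%:C)%C 1.
Definition phi2 (eps : R) (z : C) : 'M[C]_2 :=
  (1 - z^-1)^-1 *: phi1 eps z.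
Definition phi3 (z : C) : 'M[C]_2 := mx2 1 z^-1 1 1.
Definition phi4 (z : C) : 'M[C]_2 := (1 - z^-1)^-1 *: phi3 z.
Definition Phi (eps : R) (z : C) : 'M[C]_2 :=
  phi1 eps z *m phi2 eps z *m phi3 z *m phi4 z.
Definition phiN (alpha beta : R) (N : nat) (z : C) : 'M[C]_2 :=
  Phi alpha z ^+ N./2 *m Phi beta z ^+ N./2.
Definition tN (alpha beta : R) (N : nat) (z : C) : C := \tr (phiN alpha beta N z).
(* sqrt(t^2 - 4) := t (1 - 4/t^2)^{1/2}, principal branch *)
Definition sqrt_t2m4 (t : C) : C := t * sqrtc (1 - 4 / t ^+ 2).
Definition r1N (alpha beta : R) (N : nat) (z : C) : C :=
  (tN alpha beta N z + sqrt_t2m4 (tN alpha beta N z)) / 2.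
Definition r2N (alpha beta : R) (N : nat) (z : C) : C :=
  (tN alpha beta N z - sqrt_t2m4 (tN alpha beta N z)) / 2.

Definition holomorphic_near (g : C -> C) (a : C) : Prop :=
  \forall z \near (a : C^o), derivable (g : C^o -> C^o) z 1.

Definition has_pole_of_order (f : C -> C) (a : C) (m : nat) : Prop :=
  exists g : C -> C, [/\ holomorphic_near g a, g a != 0 &
    \forall z \near dnbhs (a : C^o), f z = g z / (z - a) ^+ m].

Definition has_zero_of_order (f : C -> C) (a : C) (m : nat) : Prop :=
  exists g : C -> C, [/\ holomorphic_near g a, g a != 0 &
    \forall z \near dnbhs (a : C^o), f z = (z - a) ^+ m * g z].

End Defs.

(* Phi_eps(z) = (z/(z-1))^2 Psi_eps(z) with Psi_eps = phi_{eps,1}^2 phi_3^2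
   holomorphic on C \ {0}, so t_N = P / (z-1)^(2N) where
   P(z) = z^(2N) tr(Psi_alpha^(N/2) Psi_beta^(N/2)) is holomorphic near 1, and
   P(1) > 0 because every entry of Psi_eps(1) is positive.  Near 1 the branch
   s = (1 - 4/t_N^2)^(1/2) = (1 - 4 (z-1)^(4N) / P^2)^(1/2) is holomorphic with
   s(1) = 1, hence r_{1,N} = P (1 + s) / 2 / (z-1)^(2N) has a pole of order 2N,
   and r_{2,N} = 1 / r_{1,N} = (z-1)^(2N) * 2 / (P (1 + s)) a zero of order 2N. *)

From HB Require Import structures.
From mathcomp Require Import all_boot all_order all_algebra.
From mathcomp Require Import complex.
From mathcomp Require Import all_classical all_reals all_analysis.
From mathcomp Require Import ring lra.
Set Implicit Arguments. Unset Strict Implicit. Unset Printing Implicit Defensive.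
Import Order.TTheory GRing.Theory Num.Theory.
Local Open Scope ring_scope.

Section ScalarDerivable.
Variable K : numFieldType.
Implicit Types (f g : K -> K) (z : K).
Local Notation derivable1 f z := (derivable (f : K^o -> K^o) z 1).

Lemma derivable1_comp f g z :
  derivable1 f z -> derivable1 g (f z) -> derivable1 (g \o f) z.
Proof.
move=> /derivable1_diffP df /derivable1_diffP dg.
apply/derivable1_diffP; exact: (differentiable_comp df dg).
Qed.

Lemma derivable1X f n z : derivable1 f z -> derivable1 (fun w => f w ^+ n) z.
Proof. by move=> df; rewrite -exprfctE; exact: derivableX. Qed.

Lemma derivable1_continuous f z :
  derivable1 f z -> {for z, continuous (f : K^o -> K^o)}.
Proof. by move=> /derivable1_diffP/differentiable_continuous. Qed.

Lemma derivable1_sum n (h : 'I_n -> K -> K) z :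
  (forall k, derivable1 (h k) z) -> derivable1 (fun w => \sum_(k < n) h k w) z.
Proof. by move=> dh; rewrite -fct_sumE; apply: derivable_sum. Qed.

Definition mx_derivable m n (F : K -> 'M[K]_(m, n)) z :=
  forall i j, derivable1 (fun w => F w i j) z.

Lemma mx_derivable_mul m n p (F : K -> 'M[K]_(m, n)) (G : K -> 'M[K]_(n, p)) z :
  mx_derivable F z -> mx_derivable G z -> mx_derivable (fun w => F w *m G w) z.
Proof.
move=> dF dG i j; under eq_fun do rewrite mxE.
by apply: derivable1_sum => k; exact: (derivableM (dF i k) (dG k j)).
Qed.

Lemma mx_derivable_exp n (F : K -> 'M[K]_n.+1) k z :
  mx_derivable F z -> mx_derivable (fun w => F w ^+ k) z.
Proof.
move=> dF; elim: k => [|k IHk].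
  by move=> i j; exact: derivable_cst.
under [fun w => _ ^+ _]eq_fun do rewrite exprS.
exact: mx_derivable_mul.
Qed.

Lemma derivable_mxtrace n (F : K -> 'M[K]_n) z :
  mx_derivable F z -> derivable1 (fun w => \tr (F w)) z.
Proof. by move=> dF; apply: derivable1_sum => k; exact: dF. Qed.

End ScalarDerivable.

Section PositiveMatrices.
Variable T : numDomainType.

Definition mx_pos m n (A : 'M[T]_(m, n)) := forall i j, 0 < A i j.

Lemma mx_pos_mul m n p (A : 'M[T]_(m, n.+1)) (B : 'M[T]_(n.+1, p)) :
  mx_pos A -> mx_pos B -> mx_pos (A *m B).
Proof.
move=> pA pB i j; rewrite mxE big_ord_recl.
by rewrite ltr_pwDl ?mulr_gt0 // sumr_ge0 // => k _; rewrite ltW ?mulr_gt0.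
Qed.

Lemma mx_pos_exp n (A : 'M[T]_n.+1) k : mx_pos A -> mx_pos (A ^+ k.+1).
Proof.
move=> pA; elim: k => [|k IHk]; first by rewrite expr1.
by rewrite exprS; apply: mx_pos_mul.
Qed.

Lemma mxtrace_gt0 n (A : 'M[T]_n.+1) : mx_pos A -> 0 < \tr A.
Proof.
move=> pA; rewrite /mxtrace big_ord_recl.
by rewrite ltr_pwDl // sumr_ge0 // => k _; rewrite ltW.
Qed.

End PositiveMatrices.

Section ComplexSqrt.
Variable R : rcfType.
Local Notation C := R[i].
Local Notation Re := (@complex.Re R).

Lemma Re_sqrtc_ge0 (x : C) : 0 <= Re (sqrtc x).
Proof. by case: x => a b; exact: sqrtr_ge0. Qed.

Lemma Re_sqrtc_gt0 (x : C) : 0 < Re x -> 0 < Re (sqrtc x).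
Proof.
move=> x_gt0; have := sqr_sqrtc x; have := Re_sqrtc_ge0 x.
move: (sqrtc x) => s s_ge0 sx; move: x_gt0 s_ge0; rewrite -sx expr2.
by case: s {sx} => p q /=; nra.
Qed.

Lemma Re_le_normc (x : C) : 0 <= Re x -> (Re x)%:C%C <= `|x|.
Proof. by move=> x_ge0; rewrite -[Re x]ger0_norm ?normc_ge_Re. Qed.

Lemma one_add_sqrtc_neq0 (x : C) : 1 + sqrtc x != 0.
Proof.
have := Re_sqrtc_ge0 x; case: (sqrtc x) => p q /= p_ge0.
by apply/eqP => /(congr1 (@complex.Re R)) /=; lra.
Qed.

Lemma Re_gt0_near1 (x : C) : `|x - 1| < 1 -> 0 < Re x.
Proof.
move=> /(le_lt_trans (normc_ge_Re _)); rewrite -[1 : C]/(1%:C)%C ltcR raddfB /=.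
by rewrite ltr_norml; lra.
Qed.

Lemma derivable_sqrtc (y : C) :
  0 < Re (sqrtc y) -> derivable (@sqrtc R : C^o -> C^o) y 1.
Proof.
(* The difference quotient is [(sqrtc (h + y) + sqrtc y)^-1], whose denominator
   has real part at least [c] since [Re (sqrtc _) >= 0]. *)
set c := Re (sqrtc y) => c_gt0.
have c_le (u : C) : c%:C%C <= `|sqrtc u + sqrtc y|.
  apply: le_trans (Re_le_normc _); rewrite raddfD /= ?lecR ?lerDr ?Re_sqrtc_ge0 //.
  by rewrite addr_ge0 ?Re_sqrtc_ge0.
have cC_gt0 : 0 < c%:C%C :> C by rewrite ltcR.
apply/cvg_ex; exists (sqrtc y + sqrtc y)^-1; apply/cvgrPdist_lt => e e_gt0.
near=> h.
have h_neq0 : h != 0 by near: h; exact: (@nbhs_dnbhs_neq C^o 0).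
have h_lt : `|h| < e * c%:C%C ^+ 3.
  by near: h; apply: (@dnbhs0_lt C C^o); rewrite mulr_gt0 ?exprn_gt0.
set S := sqrtc (h%:A + y) + sqrtc y; set T := sqrtc y + sqrtc y.
have S_ge : c%:C%C <= `|S| := c_le _.
have T_ge : c%:C%C <= `|T| := c_le _.
have S_neq0 : S != 0 by rewrite -normr_gt0 (lt_le_trans cC_gt0).
have T_neq0 : T != 0 by rewrite -normr_gt0 (lt_le_trans cC_gt0).
have quotE : h^-1 *: (sqrtc (h%:A + y) - sqrtc y) = S^-1.
  apply: (mulIf S_neq0); rewrite mulVf // -scalerAl -subr_sqr !sqr_sqrtc.
  by rewrite /GRing.scale /= mulr1 addrK mulVf.
have STE : S - T = h / S.
  rewrite /S /T opprD addrACA subrr addr0 -quotE /GRing.scale /=.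
  by rewrite mulrA divff // mul1r.
clearbody S T.
have diffE : T^-1 - S^-1 = h / (S ^+ 2 * T).
  have -> : h = S * (S - T) by rewrite STE mulrC divfK.
  by field; rewrite S_neq0 T_neq0.
rewrite /= quotE diffE normrM normfV normrM normrX.
have c_ge0 : 0 <= c%:C%C :> C := ltW cC_gt0.
rewrite ltr_pdivrMr ?mulr_gt0 ?exprn_gt0 ?normr_gt0 //.
apply: (lt_le_trans h_lt); rewrite ler_pM2l // exprSr expr2 [_ ^+ 2]expr2.
by rewrite !ler_pM ?mulr_ge0.
Unshelve. all: by end_near.
Qed.

End ComplexSqrt.

Lemma small_rootE (F : numFieldType) (t s : F) :
  t != 0 -> 1 + s != 0 -> s ^+ 2 = 1 - 4 / t ^+ 2 ->
  (t - t * s) / 2 = 2 / (t * (1 + s)).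
Proof.
move=> t_neq0 s1_neq0 sE; apply: (mulIf s1_neq0).
have -> : (t - t * s) / 2 * (1 + s) = t * (1 - s ^+ 2) / 2 by ring.
by rewrite sE; field; rewrite s1_neq0 t_neq0.
Qed.

Section EigenvaluesNearPole.
Variable R : realType.
Local Notation C := R[i].
Local Notation Re := (@complex.Re R).
Local Notation derivable1 f z := (derivable (f : C^o -> C^o) z 1).

Variables (t P : C -> C) (a : C) (m : nat).
Hypotheses (m_gt0 : (0 < m)%N) (P_holo : holomorphic_near P a)
  (Pa_neq0 : P a != 0)
  (tE : \forall z \near dnbhs (a : C^o), t z = P z / (z - a) ^+ m).

(* [1 - 4 / t^2] written through [P], so that it is holomorphic at [a] too. *)
Let Q z := 1 - 4 * ((z - a) ^+ m) ^+ 2 / P z ^+ 2.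
Let s z := sqrtc (Q z).

Lemma derivable_Q z : derivable1 P z -> P z != 0 -> derivable1 Q z.
Proof.
move=> dPz Pz_neq0.
have dD : derivable1 (fun w => ((w - a) ^+ m) ^+ 2) z.
  have dB : derivable1 (fun w => w - a) z :=
    derivableB (@derivable_id _ _ z 1) (derivable_cst (a : C^o) z 1).
  exact: derivable1X (derivable1X dB).
have dPV := derivableV (expf_neq0 2 Pz_neq0) (derivable1X (n := 2) dPz).
exact: derivableB (derivable_cst _ z 1)
  (derivableM (derivableM (derivable_cst _ z 1) dD) dPV).
Qed.

Lemma Qa_eq1 : Q a = 1.
Proof. by rewrite /Q subrr expr0n (gtn_eqF m_gt0) expr0n /= mulr0 mul0r subr0. Qed.

Lemma near_regular :
  \forall z \near (a : C^o), [/\ derivable1 P z, P z != 0 & derivable1 s z].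
Proof.
have dPa : derivable1 P a := nbhs_singleton P_holo.
have Q_cont : ((Q : C^o -> C^o) @ (a : C^o) --> (1 : C^o))%classic.
  by rewrite -Qa_eq1; exact: derivable1_continuous (derivable_Q dPa Pa_neq0).
near=> z.
have dPz : derivable1 P z by near: z; exact: P_holo.
have Pz_neq0 : P z != 0.
  by near: z; exact: (cvgr_neq0 _ (derivable1_continuous dPa) Pa_neq0).
have ReQ_gt0 : 0 < Re (Q z).
  by apply: Re_gt0_near1; near: z; exact: (cvgr_distC_lt _ _ Q_cont _ ltr01).
split; [exact: dPz | exact: Pz_neq0 |].
exact: derivable1_comp (derivable_Q dPz Pz_neq0)
  (derivable_sqrtc (Re_sqrtc_gt0 ReQ_gt0)).
Unshelve. all: by end_near.
Qed.

Lemma near_tE : \forall z \near dnbhs (a : C^o),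
  [/\ t z = P z / (z - a) ^+ m, (z - a) ^+ m != 0, P z != 0 &
      sqrtc (1 - 4 / t z ^+ 2) = s z].
Proof.
near=> z.
have z_neq_a : z != a by near: z; exact: (@nbhs_dnbhs_neq C^o a).
have Pz_neq0 : P z != 0.
  by near: z; apply: nbhs_dnbhs; apply: filterS near_regular => ? [].
have tz : t z = P z / (z - a) ^+ m by near: z; exact: tE.
have D_neq0 : (z - a) ^+ m != 0 by rewrite expf_neq0 // subr_eq0.
split; [exact: tz | exact: D_neq0 | exact: Pz_neq0 |].
rewrite /s /Q tz; congr (sqrtc (1 - _)).
by field; rewrite D_neq0 Pz_neq0.
Unshelve. all: by end_near.
Qed.

Lemma large_eigenvalue_pole :
  has_pole_of_order (fun z => (t z + sqrt_t2m4 (t z)) / 2) a m.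
Proof.
exists (fun z => P z * (1 + s z) / 2); split.
- near=> z.
  have [dPz _ dsz] : [/\ derivable1 P z, P z != 0 & derivable1 s z].
    by near: z; exact: near_regular.
  exact: derivableM (derivableM dPz (derivableD (derivable_cst _ z 1) dsz))
    (derivable_cst _ z 1).
- by rewrite /s Qa_eq1 sqrtc1 mulfK ?pnatr_eq0.
- near=> z.
  have [tz D_neq0 _ sE] : [/\ t z = P z / (z - a) ^+ m, (z - a) ^+ m != 0,
      P z != 0 & sqrtc (1 - 4 / t z ^+ 2) = s z] by near: z; exact: near_tE.
  by rewrite /sqrt_t2m4 sE tz; field.
Unshelve. all: by end_near.
Qed.

Lemma small_eigenvalue_zero :
  has_zero_of_order (fun z => (t z - sqrt_t2m4 (t z)) / 2) a m.
Proof.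
exists (fun z => 2 / (P z * (1 + s z))); split.
- near=> z.
  have [dPz Pz_neq0 dsz] : [/\ derivable1 P z, P z != 0 & derivable1 s z].
    by near: z; exact: near_regular.
  have dPs : derivable1 (fun w => P w * (1 + s w)) z :=
    derivableM dPz (derivableD (derivable_cst _ z 1) dsz).
  exact: derivableM (derivable_cst _ z 1)
    (derivableV (mulf_neq0 Pz_neq0 (one_add_sqrtc_neq0 _)) dPs).
- by rewrite /s Qa_eq1 sqrtc1 mulf_neq0 ?invr_eq0 ?mulf_neq0 ?pnatr_eq0.
- near=> z.
  have [tz D_neq0 Pz_neq0 sE] : [/\ t z = P z / (z - a) ^+ m, (z - a) ^+ m != 0,
      P z != 0 & sqrtc (1 - 4 / t z ^+ 2) = s z] by near: z; exact: near_tE.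
  have t_neq0 : t z != 0 by rewrite tz mulf_neq0 ?invr_eq0.
  rewrite /sqrt_t2m4 small_rootE ?one_add_sqrtc_neq0 ?sqr_sqrtc //.
  by rewrite sE tz; field; rewrite D_neq0 Pz_neq0 one_add_sqrtc_neq0.
Unshelve. all: by end_near.
Qed.

End EigenvaluesNearPole.

Lemma mxtrace_scale_exp (K : comNzRingType) n (c : K) (A B : 'M[K]_n.+1) k l :
  \tr ((c *: A) ^+ k *m (c *: B) ^+ l) = c ^+ (k + l) * \tr (A ^+ k *m B ^+ l).
Proof. by rewrite !exprZn -scalemxAl -scalemxAr scalerA mxtraceZ exprD. Qed.

Section TransferMatrices.
Variable R : realType.
Local Notation C := R[i].
Local Notation derivable1 f z := (derivable (f : C^o -> C^o) z 1).

Definition Psi (eps : R) (z : C) : 'M[C]_2 :=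
  phi1 eps z *m phi1 eps z *m phi3 z *m phi3 z.

Lemma PhiE eps z : z != 0 -> Phi eps z = (z / (z - 1)) ^+ 2 *: Psi eps z.
Proof.
move=> z_neq0; have -> : z / (z - 1) = (1 - z^-1)^-1.
  by rewrite -invf_div mulrBl divff // mul1r.
rewrite /Phi /phi2 /phi4 /Psi -!scalemxAr -!scalemxAl scalerA -expr2.
by rewrite -!mulmxA.
Qed.

Definition tN_num (a b : R) (N : nat) (z : C) : C :=
  z ^+ (2 * N) * \tr (Psi a z ^+ N./2 *m Psi b z ^+ N./2).

Lemma tNE a b N z : ~~ odd N -> z != 0 ->
  tN a b N z = tN_num a b N z / (z - 1) ^+ (2 * N).
Proof.
move=> N_even z_neq0.
have N2E : (2 * (N./2 + N./2) = 2 * N)%N.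
  by rewrite addnn -[in RHS](odd_double_half N) (negbTE N_even).
rewrite /tN /phiN !PhiE // mxtrace_scale_exp -exprM N2E.
by rewrite /tN_num exprMn exprVn mulrAC.
Qed.

Lemma mx_derivable_mx2 (f g h k : C -> C) z :
  derivable1 f z -> derivable1 g z -> derivable1 h z -> derivable1 k z ->
  mx_derivable (fun w => mx2 (f w) (g w) (h w) (k w)) z.
Proof.
move=> df dg dh dk i j.
have -> : (fun w => mx2 (f w) (g w) (h w) (k w) i j) =
    if i == 0 :> nat then (if j == 0 :> nat then f else g)
    else (if j == 0 :> nat then h else k).
  by apply/funext => w; rewrite mxE; do 2 case: ifP.
by do 2 case: ifP.
Qed.

Lemma mx_derivable_Psi eps z : z != 0 -> mx_derivable (Psi eps) z.
Proof.
move=> z_neq0.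
have dV : derivable1 (fun w => w^-1) z :=
  derivableV z_neq0 (@derivable_id _ _ (z : C^o) 1).
have dc (c : C) : derivable1 (fun=> c) z := derivable_cst _ (z : C^o) 1.
have d1 : mx_derivable (phi1 eps) z.
  exact: mx_derivable_mx2 (dc 1) (derivableM (dc _) dV) (dc _) (dc 1).
have d3 : mx_derivable (@phi3 R) z.
  exact: mx_derivable_mx2 (dc 1) dV (dc 1) (dc 1).
exact: mx_derivable_mul (mx_derivable_mul (mx_derivable_mul d1 d1) d3) d3.
Qed.

Lemma derivable_tN_num a b N z : z != 0 -> derivable1 (tN_num a b N) z.
Proof.
move=> z_neq0; apply: derivableM.
  exact: derivable1X (@derivable_id _ _ (z : C^o) 1).
by apply/derivable_mxtrace/mx_derivable_mul; apply: mx_derivable_exp;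
  exact: mx_derivable_Psi.
Qed.

Lemma mx_pos_Psi1 eps : 0 < eps -> mx_pos (Psi eps 1).
Proof.
move=> eps_gt0.
have pos2 (x y : C) : 0 < x -> 0 < y -> mx_pos (mx2 1 x y 1).
  by move=> x_gt0 y_gt0 i j; rewrite mxE; do 2 case: ifP.
have p1 : mx_pos (phi1 eps 1).
  by apply: pos2; rewrite ?invr1 ?mulr1 ltcR ?invr_gt0 exprn_gt0.
have p3 : mx_pos (@phi3 R 1) by apply: pos2; rewrite ?invr1.
exact: mx_pos_mul (mx_pos_mul (mx_pos_mul p1 p1) p3) p3.
Qed.

Lemma tN_num1_neq0 a b N :
  0 < a -> 0 < b -> (2 <= N)%N -> tN_num a b N 1 != 0.
Proof.
move=> a_gt0 b_gt0 N_ge2; rewrite /tN_num expr1n mul1r.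
have [k ->] : exists k, N./2 = k.+1 by exists N./2.-1; rewrite prednK // half_gt0.
rewrite gt_eqF // mxtrace_gt0 //.
exact: mx_pos_mul (mx_pos_exp _ (mx_pos_Psi1 a_gt0))
  (mx_pos_exp _ (mx_pos_Psi1 b_gt0)).
Qed.

End TransferMatrices.

Theorem lemma3p3 (R : realType) (alpha beta : R)
  (halpha : 0 < alpha < 1) (hbeta : 0 < beta < 1)
  (N : nat) (hN : (2 <= N)%N) (hNeven : ~~ odd N) :
  has_pole_of_order (r1N alpha beta N) 1 (2 * N) /\
  has_zero_of_order (r2N alpha beta N) 1 (2 * N).
Proof.
case/andP: halpha => alpha_gt0 _; case/andP: hbeta => beta_gt0 _.
have N2_gt0 : (0 < 2 * N)%N by rewrite muln_gt0 (leq_trans _ hN).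
have near1_neq0 : \forall z \near (1 : R[i]^o), z != 0.
  exact: (cvgr_neq0 _ (@cvg_id _ (nbhs (1 : R[i]^o))) (oner_neq0 _)).
have P_holo : holomorphic_near (tN_num alpha beta N) 1.
  by near=> z; apply: derivable_tN_num; near: z.
have tE : \forall z \near dnbhs (1 : R[i]^o),
    tN alpha beta N z = tN_num alpha beta N z / (z - 1) ^+ (2 * N).
  by near=> z; apply: tNE => //; near: z; apply: nbhs_dnbhs.
have P1 := tN_num1_neq0 alpha_gt0 beta_gt0 hN.
split; [exact: large_eigenvalue_pole N2_gt0 P_holo P1 tE
       | exact: small_eigenvalue_zero N2_gt0 P_holo P1 tE].
Unshelve. all: by end_near.
Qed.
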